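(* Let $n\ge 3$ and let $g$ be a prime power such that $g\ge n$ if $g$ is even and $g\ge n+1$ if $g$ is odd. Then there exists a $\mathrm{TOC}_{g+1}(n,4,3)$.
   Context: $\mathcal{H}_q(n,w)$ is the set of all words of length $n$ over $\mathbb{Z}_q$ with exactly $w$ nonzero entries, with the Hamming distance. An $(n,d,w)_q$-code is a nonempty subset of $\mathcal{H}_q(n,w)$ in which any two distinct words have Hamming distance at least $d$; $A_q(n,d,w)$ is the maximum size of such a code and a code of this size is optimal. A $\mathrm{TOC}_q(n,d,w)$ is a partition of $\mathcal{H}_q(n,w)$ into mutually disjoint optimal $(n,d,w)_q$-codes. *)

From mathcomp Require Import all_boot.
Set Implicit Arguments. Unset Strict Implicit. Unset Printing Implicit Defensive.

(* Words of length n over Z_q, represented as finite functions 'I_n -> 'I_q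
   (the ordinal 'I_q is the underlying set {0,...,q-1} of Z_q; only the zero
   element matters here). *)
Definition word (q n : nat) := {ffun 'I_n -> 'I_q}.

Definition wt (q n : nat) (x : word q n) : nat := #|[set i | val (x i) != 0]|.

Definition hdist (q n : nat) (x y : word q n) : nat := #|[set i | x i != y i]|.

Definition Hqnw (q n w : nat) : {set word q n} := [set x | wt x == w].

Definition is_code (q n d w : nat) (C : {set word q n}) : bool :=
  [&& C != set0, C \subset Hqnw q n w &
      [forall x in C, forall y in C, (x != y) ==> (d <= hdist x y)]].

Definition Aq (q n d w : nat) : nat :=
  \max_(C : {set word q n} | is_code d w C) #|C|.

Definition optimal_code (q n d w : nat) (C : {set word q n}) : bool :=
  is_code d w C && (#|C| == Aq q n d w).

Definition is_TOC (q n d w : nat) (P : {set {set word q n}}) : bool :=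
  partition P (Hqnw q n w) && [forall C in P, optimal_code d w C].

Definition TOC_exists (q n d w : nat) : Prop :=
  exists P : {set {set word q n}}, is_TOC d w P.

Definition prime_power (g : nat) : Prop :=
  exists p k : nat, prime p /\ 0 < k /\ g = p ^ k.

From mathcomp Require Import all_boot all_algebra finfield zify.
Import GRing.Theory.
Set Implicit Arguments. Unset Strict Implicit. Unset Printing Implicit Defensive.

(* Identify the nonzero symbols of Z_(g+1) with the field F_g and the n
   coordinates with distinct field elements lam_i.  For a polynomial p of
   degree < 3, the code C_p contains, for each 3-set T of coordinates, the word
   supported on T whose entry at i is p(lam_i) + sum_(j in T) lam_j.  Two
   supports sharing two points have different sums (their remaining points
   differ), so the two words differ on all of T u T'; hence C_p has minimum
   distance 4 and C(n,3) words, which is optimal because the words of a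
   weight-3 code of distance 4 have distinct supports.  Interpolation through
   three points puts every weight-3 word in exactly one C_p. *)

Section CodeBound.
Variables q n : nat.

Definition supp (x : word q n) : {set 'I_n} := [set i | val (x i) != 0].

Lemma hdist_le_supp (x y : word q n) :
  supp x = supp y -> hdist x y <= #|supp x|.
Proof.
move=> xy; apply/subset_leq_card/subsetP => i; rewrite !inE.
apply: contraR; rewrite negbK => x0; apply/eqP/val_inj.
have : i \notin supp y by rewrite -xy inE negbK.
by rewrite inE negbK (eqP x0) eq_sym => /eqP.
Qed.

Lemma supp_code_inj d w (C : {set word q n}) :
  w < d -> is_code d w C -> {in C &, injective supp}.
Proof.
move=> wd /and3P [_ /subsetP CH /forall_inP Cd] x y xC yC xy.
apply/eqP; apply: contraLR wd => /(implyP (forall_inP (Cd x xC) y yC)) dxy.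
rewrite -leqNgt (leq_trans dxy) // (leq_trans (hdist_le_supp xy)) //.
by have := CH x xC; rewrite inE => /eqP <-.
Qed.

Lemma card_code_le d w (C : {set word q n}) :
  w < d -> is_code d w C -> #|C| <= 'C(n, w).
Proof.
move=> wd Cc; rewrite -(card_in_imset (supp_code_inj wd Cc)).
rewrite -[n in 'C(n, w)]card_ord -card_draws.
apply/subset_leq_card/subsetP => _ /imsetP [x xC ->].
by case/and3P: Cc => _ /subsetP /(_ x xC) + _; rewrite !inE.
Qed.

Lemma optimal_code_of_card d w (C : {set word q n}) :
  w < d -> is_code d w C -> #|C| = 'C(n, w) -> optimal_code d w C.
Proof.
move=> wd Cc cardC; rewrite /optimal_code Cc eqn_leq /Aq.
rewrite (leq_bigmax_cond _ Cc) /= cardC.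
by apply/bigmax_leqP => D; apply: card_code_le.
Qed.

End CodeBound.

Arguments supp {q n} x.

Lemma card_setI_lt (T : finType) (A B : {set T}) :
  #|A| = #|B| -> A != B -> #|A :&: B| < #|A|.
Proof.
move=> AB neqAB; rewrite ltn_neqAle subset_leq_card ?subsetIl // andbT.
apply: contra neqAB => /eqP AIB.
have AIA : A :&: B = A by apply/eqP; rewrite eqEcard subsetIl AIB leqnn.
by rewrite eqEcard -AB leqnn andbT -AIA subsetIr.
Qed.

Lemma eq_poly_on_uniq (R : idomainType) (p p' : {poly R}) (rs : seq R) :
  uniq rs -> size p <= size rs -> size p' <= size rs ->
  {in rs, forall x, (p.[x] = p'.[x])%R} -> p = p'.
Proof.
move=> urs sp sp' pp'; apply/eqP; rewrite -subr_eq0; apply/eqP.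
apply: (roots_geq_poly_eq0 _ urs).
  by apply/allP => x xrs; rewrite rootE !hornerE pp' ?subrr.
by rewrite (leq_trans (size_polyD _ _)) // size_polyN geq_max sp sp'.
Qed.

Section PolynomialWords.
Variables (F : finFieldType) (n k : nat) (lam : 'I_n -> F).
Hypothesis lam_inj : injective lam.
Local Open Scope ring_scope.

Definition sym (a : F) : 'I_#|F|.+1 := lift ord0 (enum_rank a).

Definition unsym (v : 'I_#|F|.+1) : F :=
  if unlift ord0 v is Some j then enum_val j else 0.

Lemma sym_inj : injective sym.
Proof. by move=> a b /lift_inj /enum_rank_inj. Qed.

Lemma unsymK v : (val v != 0)%N -> sym (unsym v) = v.
Proof.
move=> v0; have [|j -> _] := unlift_some (_ : ord0 != v).
  by apply: contra v0 => /eqP <-.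
by rewrite /unsym liftK /sym enum_valK.
Qed.

Definition sigma (T : {set 'I_n}) : F := \sum_(i in T) lam i.

Definition polyword (p : {poly F}) (T : {set 'I_n}) : word #|F|.+1 n :=
  [ffun i => if i \in T then sym (p.[lam i] + sigma T) else ord0].

Lemma supp_polyword p T : supp (polyword p T) = T.
Proof. by apply/setP => i; rewrite !inE ffunE; case: (i \in T). Qed.

Lemma polyword_neq p T T' i : i \in T :|: T' ->
  ((i \in T) != (i \in T')) || (sigma T != sigma T') ->
  polyword p T i != polyword p T' i.
Proof.
rewrite !ffunE inE.
case: (i \in T); case: (i \in T') => //= _.
by rewrite (inj_eq sym_inj) (inj_eq (addrI _)).
Qed.

Lemma card_setD_gt1_of_sigma_eq (T T' : {set 'I_n}) :
  #|T| = #|T'| -> T != T' -> sigma T = sigma T' -> (1 < #|T :\: T'|)%N.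
Proof.
move=> TT' neqTT' eqs; have ltI := card_setI_lt TT' neqTT'.
have cD : #|T :\: T'| = #|T' :\: T| by rewrite !cardsD setIC TT'.
rewrite ltn_neqAle cardsD subn_gt0 ltI andbT; apply/negP => /eqP D1.
have /cards1P [a Da] : #|T :\: T'| == 1%N by rewrite cardsD -D1.
have /cards1P [b Db] : #|T' :\: T| == 1%N by rewrite -cD cardsD -D1.
have sigma1 (A B : {set 'I_n}) x : A :\: B = [set x] ->
    sigma A = sigma (A :&: B) + lam x.
  by move=> ABx; rewrite /sigma (big_setID B) ABx big_set1.
move: eqs; rewrite (sigma1 _ _ _ Da) (sigma1 _ _ _ Db) setIC.
move=> /addrI /lam_inj eab.
have := set11 a; rewrite -Da eab !inE => /andP [bT' _].
by have := set11 b; rewrite -Db !inE (negbTE bT') andbF.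
Qed.

Lemma hdist_polyword p (T T' : {set 'I_n}) :
  (3 <= k)%N -> #|T| = k -> #|T'| = k -> T != T' ->
  (4 <= hdist (polyword p T) (polyword p T'))%N.
Proof.
move=> k3 cT cT' neqTT'; rewrite /hdist; set D := [set i | _].
have neqD i : i \in T :|: T' ->
    ((i \in T) != (i \in T')) || (sigma T != sigma T') -> i \in D.
  by move=> iU di; rewrite inE polyword_neq.
have ltI := card_setI_lt (etrans cT (esym cT')) neqTT'.
have [eqs|neqs] := eqVneq (sigma T) (sigma T'); last first.
  have UD : T :|: T' \subset D.
    by apply/subsetP => i iU; rewrite neqD ?neqs ?orbT.
  have UDc : (#|T :|: T'| <= #|D|)%N := subset_leq_card UD.
  by have := cardsUI T T'; lia.
have SD : (T :\: T') :|: (T' :\: T) \subset D.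
  apply/subsetP => i iS; apply: neqD; move: iS; rewrite !inE;
  by case: (i \in T); case: (i \in T').
have SDc : (#|(T :\: T') :|: (T' :\: T)| <= #|D|)%N := subset_leq_card SD.
have := cardsUI (T :\: T') (T' :\: T).
have -> : (T :\: T') :&: (T' :\: T) = set0.
  by apply/setP => i; rewrite !inE; case: (i \in T); case: (i \in T').
have := card_setD_gt1_of_sigma_eq (etrans cT (esym cT')) neqTT' eqs.
have := cardsD T T'; have := cardsD T' T.
by rewrite [T' :&: T]setIC cards0; lia.
Qed.

Definition polycode (p : {poly F}) : {set word #|F|.+1 n} :=
  [set polyword p T | T in [set T : {set 'I_n} | #|T| == k]].

Lemma polyword_in_Hqnw p (T : {set 'I_n}) :
  #|T| = k -> polyword p T \in Hqnw #|F|.+1 n k.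
Proof. by rewrite inE -[wt _]/#|supp _| supp_polyword => ->. Qed.

Lemma card_polycode p : #|polycode p| = 'C(n, k).
Proof.
rewrite card_in_imset ?card_draws ?card_ord // => T T' _ _ /(congr1 supp).
by rewrite !supp_polyword.
Qed.

Lemma polycode_is_code p : (3 <= k)%N -> (k <= n)%N -> is_code 4 k (polycode p).
Proof.
move=> k3 kn; apply/and3P; split.
- by rewrite -card_gt0 card_polycode bin_gt0.
- apply/subsetP => x /imsetP [T]; rewrite inE => /eqP cT ->.
  exact: polyword_in_Hqnw.
apply/forall_inP => x /imsetP [T]; rewrite inE => /eqP cT ->.
apply/forall_inP => y /imsetP [T']; rewrite inE => /eqP cT' ->.
apply/implyP => neq; apply: hdist_polyword => //.
by apply: contraNneq neq => ->.
Qed.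

Lemma eq_poly_on_set (p p' : {poly F}) (T : {set 'I_n}) :
  (size p <= k)%N -> (size p' <= k)%N -> #|T| = k ->
  {in T, forall i, p.[lam i] = p'.[lam i]} -> p = p'.
Proof.
move=> sp sp' cT pp'; have srs : size [seq lam i | i <- enum T] = k.
  by rewrite size_map -cardE.
apply: (eq_poly_on_uniq (rs := [seq lam i | i <- enum T])); rewrite ?srs //.
  by rewrite (map_inj_uniq lam_inj) enum_uniq.
by move=> _ /mapP [i iT ->]; apply: pp'; rewrite -mem_enum.
Qed.

Lemma polyword_inj (p p' : {poly F}) (T T' : {set 'I_n}) :
  (size p <= k)%N -> (size p' <= k)%N -> #|T| = k ->
  polyword p T = polyword p' T' -> p = p'.
Proof.
move=> sp sp' cT eqw; have eqT : T = T'.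
  by rewrite -(supp_polyword p T) eqw supp_polyword.
apply: (eq_poly_on_set sp sp' cT) => i iT.
move/(congr1 (fun x : word _ n => x i)): eqw.
by rewrite !ffunE -eqT iT => /sym_inj /addIr.
Qed.

Lemma polyword_interpolation x : x \in Hqnw #|F|.+1 n k ->
  exists p : {poly_k F}, x = polyword p (supp x).
Proof.
rewrite inE => /eqP; rewrite -[wt x]/#|supp x|; set T := supp x => cT.
pose ev (p : {poly_k F}) := [ffun i : {i | i \in T} => p.[lam (val i)]].
have ev_inj : injective ev.
  move=> p p' /ffunP evp; apply/val_inj.
  apply: (eq_poly_on_set (size_npoly p) (size_npoly p') cT) => i iT.
  by have := evp (Sub i iT); rewrite !ffunE.
pose t := [ffun i : {i | i \in T} => unsym (x (val i)) - sigma T].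
have /codomP [p /ffunP evt] : t \in codom ev.
  by apply: inj_card_onto; rewrite // card_ffun card_npoly card_sig cT.
exists p; apply/ffunP => i; rewrite ffunE; case: (boolP (i \in T)) => iT.
  have := evt (Sub i iT); rewrite !ffunE /= => <-.
  by rewrite subrK unsymK //; move: iT; rewrite inE.
by apply/val_inj; move: iT; rewrite inE negbK => /eqP.
Qed.

Definition polycodes : {set {set word #|F|.+1 n}} :=
  [set polycode p | p : {poly_k F}].

Lemma partition_polycodes :
  (k <= n)%N -> partition polycodes (Hqnw #|F|.+1 n k).
Proof.
move=> kn; apply/and3P; split.
- apply/eqP/setP => x; apply/bigcupP/idP => [[_ /imsetP [p _ ->]]|xH].
    by case/imsetP => T; rewrite inE => /eqP cT ->; apply: polyword_in_Hqnw.
  have [p ->] := polyword_interpolation xH.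
  by exists (polycode p); rewrite ?imset_f // inE; move: xH; rewrite inE.
- apply/trivIsetP => _ _ /imsetP [p _ ->] /imsetP [p' _ ->] neq.
  rewrite -setI_eq0; apply: contraR neq => /set0Pn [x /setIP [/imsetP [T]]].
  rewrite inE => /eqP cT -> /imsetP [T' _ eqw].
  by have /val_inj -> := polyword_inj (size_npoly p) (size_npoly p') cT eqw.
apply/imsetP => -[p _ e0]; have := card_polycode p.
by rewrite -e0 cards0 => /eqP; rewrite eq_sym -leqn0 leqNgt bin_gt0 kn.
Qed.
End PolynomialWords.

Theorem theorem4p9 (n g : nat) :
  3 <= n -> prime_power g ->
  (if odd g then n.+1 <= g else n <= g) ->
  TOC_exists g.+1 n 4 3.
Proof.
move=> n3 [p [m [p_pr [m_gt0 ->]]]] ng.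
have [F _ cardF] := pPrimePowerField p_pr m_gt0.
have {ng} nF : n <= #|F| by rewrite cardF; case: (odd _) ng => // /ltnW.
rewrite -cardF; pose lam (i : 'I_n) : F := enum_val (widen_ord nF i).
have lam_inj : injective lam by move=> i j /enum_val_inj [] /val_inj.
exists (polycodes 3 lam); apply/andP; split; first exact: partition_polycodes.
apply/forall_inP => _ /imsetP [P _ ->].
have P_code := polycode_is_code lam_inj P (leqnn 3) n3.
exact: optimal_code_of_card P_code (card_polycode 3 lam P).
Qed.
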